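(* Let $k\ge2$, let $M$ be a $k$-permutable monoid and let $L\in\mathfrak{L}_{Rat}(M)$. Then there exists a positive integer $m$ such that for every word $w\in L$ with $|w|\ge m$ and every factorization $w=w_1w_2\cdots w_m$ with $|w_i|\ge 1$ for $1\le i\le m$, there exist integers $0\le i_0<i_1<\cdots<i_k<i_{k+1}\le m$ such that $w=\lambda W_1W_2\cdots W_k\mu$, where $\lambda=w_1\cdots w_{i_0}$ (empty if $i_0=0$), $\mu=w_{i_{k+1}}\cdots w_m$ (empty if $i_{k+1}=m$), and $W_j=w_{1+i_{j-1}}\cdots w_{i_j}$ for $j=1,\dots,k$, and there is a permutation $\sigma$ of $\{1,\dots,k\}$, different from the identity, such that the word $\lambda W_{\sigma(1)}W_{\sigma(2)}\cdots W_{\sigma(k)}\mu$ belongs to $L$.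
   Context: A monoid $M$ is $k$-permutable if for all $s_1,\dots,s_k\in M$ there is a permutation $\sigma\neq\mathrm{id}$ of $\{1,\dots,k\}$ with $s_1\cdots s_k=s_{\sigma(1)}\cdots s_{\sigma(k)}$. An $M$-automaton is a tuple $(Q,\Sigma,M,\delta,q_0,Q_a)$ with finite state set, input alphabet $\Sigma$, initial state $q_0$, accept states $Q_a$, and $\delta: Q\times(\Sigma\cup\{\varepsilon\})\to\mathbb{P}(Q\times M)$ finite-valued; $(q',m)\in\delta(q,\sigma)$ means reading $\sigma$ in state $q$ it may go to $q'$ and multiply the register on the right by $m$. A rational monoid automaton over $M$ is an $M$-automaton with rational subsets $I_0,I_1\subseteq M$ (closure of finite subsets under union, product, Kleene star); $w$ is accepted if some computation reading $w$ from $q_0$ to an accept state has register product $x$ with $x_0x\in I_1$ for some $x_0\in I_0$. $\mathfrak{L}_{Rat}(M)$ is the family of languages so accepted. *)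

From mathcomp Require Import all_boot all_fingroup.
Set Implicit Arguments. Unset Strict Implicit. Unset Printing Implicit Defensive.

(* propositional list membership (no decidable equality needed) *)
Fixpoint lIn (A : Type) (a : A) (l : list A) : Prop :=
  match l with nil => False | cons b l' => b = a \/ lIn a l' end.

Section Monoids.
Variables (M : Type) (mul : M -> M -> M) (one : M).

Definition is_monoid : Prop :=
  (forall x y z, mul x (mul y z) = mul (mul x y) z) /\
  (forall x, mul one x = x) /\ (forall x, mul x one = x).

Definition mprod (s : seq M) : M := foldr mul one s.

Definition k_permutable (k : nat) : Prop :=
  forall s : 'I_k -> M, exists sigma : 'S_k,
    sigma != 1%g /\
    mprod [seq s j | j <- enum 'I_k] = mprod [seq s (sigma j) | j <- enum 'I_k].

Inductive ratexp : Type :=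
| RFin of list M
| RUnion of ratexp & ratexp
| RProd of ratexp & ratexp
| RStar of ratexp.

Fixpoint rat_den (e : ratexp) : M -> Prop :=
  match e with
  | RFin s => fun x => lIn x s
  | RUnion e1 e2 => fun x => rat_den e1 x \/ rat_den e2 x
  | RProd e1 e2 => fun x => exists a b, rat_den e1 a /\ rat_den e2 b /\ x = mul a b
  | RStar e1 => fun x => exists l : list M,
                   (forall a, lIn a l -> rat_den e1 a) /\ x = mprod l
  end.

Definition rational_subset (A : M -> Prop) : Prop :=
  exists e : ratexp, forall x, A x <-> rat_den e x.

(* M-automaton with finite state set Q over alphabet Sigma;
   delta q None are epsilon-moves, delta returns a finite list *)
Variables (Sigma : finType) (Q : finType)
          (delta : Q -> option Sigma -> list (Q * M)).

(* run q w x q' : from q reading w, reaching q' with register product x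
   (register starts at one and is multiplied on the right) *)
Inductive run : Q -> seq Sigma -> M -> Q -> Prop :=
| run_nil q : run q [::] one q
| run_letter q a q1 m w x q2 :
    lIn (q1, m) (delta q (Some a)) -> run q1 w x q2 -> run q (a :: w) (mul m x) q2
| run_eps q q1 m w x q2 :
    lIn (q1, m) (delta q None) -> run q1 w x q2 -> run q w (mul m x) q2.

Definition rat_aut_accepts (q0 : Q) (Qa : {set Q}) (I0 I1 : M -> Prop)
    (w : seq Sigma) : Prop :=
  exists q x, run q0 w x q /\ q \in Qa /\ exists x0, I0 x0 /\ I1 (mul x0 x).
End Monoids.

Definition in_LRat (M : Type) (mul : M -> M -> M) (one : M) (Sigma : finType)
    (L : seq Sigma -> Prop) : Prop :=
  exists (Q : finType) (delta : Q -> option Sigma -> list (Q * M))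
         (q0 : Q) (Qa : {set Q}) (I0 I1 : M -> Prop),
    rational_subset mul one I0 /\ rational_subset mul one I1 /\
    forall w, L w <-> rat_aut_accepts mul one delta q0 Qa I0 I1 w.

(* block of factors w_{a+1} ... w_b of a factorization ws *)
Definition block (T : Type) (ws : seq (seq T)) (a b : nat) : seq T :=
  flatten (take (b - a) (drop a ws)).

From mathcomp Require Import all_boot all_fingroup.
Set Implicit Arguments. Unset Strict Implicit. Unset Printing Implicit Defensive.

(* Take m = |Q| k + 1. An accepting run on w = w_1 ... w_m is in some state at
   the start of each factor, so by pigeonhole one state q occurs at k + 1 of
   these boundaries i_0 < ... < i_k. The blocks W_1, ..., W_k between them
   label loops at q, with register values y_1, ..., y_k. By k-permutability
   some sigma <> id has y_1 ... y_k = y_sigma(1) ... y_sigma(k); running the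
   loops in the order sigma therefore accepts the permuted word with the same
   final register value. *)

Lemma pigeonhole_count (T : finType) (k : nat) (s : seq T) :
  #|T| * k < size s -> exists x, k < count_mem x s.
Proof.
move=> lt_size; apply/existsP; apply: contraLR lt_size => /existsPn le_count.
rewrite -leqNgt -sum1_size (partition_big id predT) //= -sum_nat_const.
by apply: leq_sum => x _; rewrite sum1_count leqNgt le_count.
Qed.

Lemma increasing_indices (p : pred nat) (k m : nat) :
  k < count p (iota 0 m) ->
  exists i : nat -> nat,
    [/\ {homo i : a b / a <= b}, forall j, j <= k -> i j < i j.+1,
        forall j, j <= k -> p (i j) & i k.+1 <= m].
Proof.
set s := filter p (iota 0 m); rewrite -size_filter -/s => lt_k_s.
have s_sorted : sorted ltn s.
  by apply: sorted_filter; [apply: ltn_trans | apply: iota_ltn_sorted].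
have nth_s j : j < size s -> p (nth m s j) /\ nth m s j < m.
  by move=> /(mem_nth m); rewrite mem_filter mem_iota => /andP.
have nth_le j : nth m s j <= m.
  by case: (ltnP j (size s)) => [/nth_s[_ /ltnW] | /(nth_default m) ->].
have nth_lt j : j < size s -> nth m s j < nth m s j.+1.
  move=> lt_j; case: (ltnP j.+1 (size s)) => [lt_j1 | /(nth_default m) ->].
    by apply: (sorted_ltn_nth ltn_trans) => //; rewrite inE.
  by case: (nth_s _ lt_j).
exists (nth m s); split.
- apply: homo_leq => [//|? ? ?|j]; first exact: leq_trans.
  case: (ltnP j (size s)) => [/nth_lt/ltnW // | le_s_j].
  by rewrite !nth_default // (leq_trans le_s_j).
- by move=> j le_jk; apply/nth_lt/(leq_ltn_trans le_jk).
- by move=> j le_jk; case: (nth_s j (leq_ltn_trans le_jk lt_k_s)).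
- exact: nth_le.
Qed.

Section Telescope.
Variables (X : Type) (op : X -> X -> X) (e : X) (F : nat -> nat -> X).
Hypothesis F_nn : forall a, F a a = e.
Hypothesis F_cat : forall a b d, a <= b -> b <= d -> op (F a b) (F b d) = F a d.
Variable c : nat -> nat.
Hypothesis c_homo : {homo c : a b / a <= b}.

Lemma foldr_telescope s n :
  foldr op e [seq F (c j) (c j.+1) | j <- iota s n] = F (c s) (c (s + n)).
Proof.
elim: n s => [|n IH] s /=; first by rewrite addn0 F_nn.
by rewrite IH F_cat -?addSnnS // c_homo // ?leq_addr.
Qed.

Lemma telescope_ord_split k n : c k <= n ->
  op (F 0 (c 0))
     (op (foldr op e [seq F (c j) (c j.+1) | j : 'I_k <- enum 'I_k]) (F (c k) n))
  = F 0 n.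
Proof.
move=> le_ck_n; have le_c0_ck : c 0 <= c k by apply: c_homo.
have -> : [seq F (c j) (c j.+1) | j : 'I_k <- enum 'I_k]
          = [seq F (c j) (c j.+1) | j <- iota 0 k] by rewrite -val_enum_ord -map_comp.
by rewrite foldr_telescope F_cat // F_cat // (leq_trans le_c0_ck).
Qed.
End Telescope.

Definition slice (T : Type) (s : seq T) (a b : nat) : seq T := take (b - a) (drop a s).

Section Slices.
Variables (T : Type) (s : seq T).

Lemma slicenn a : slice s a a = [::].
Proof. by rewrite /slice subnn take0. Qed.

Lemma slice_full : slice s 0 (size s) = s.
Proof. by rewrite /slice subn0 drop0 take_size. Qed.

Lemma slice_cat a b c : a <= b -> b <= c -> slice s a b ++ slice s b c = slice s a c.
Proof.
move=> le_ab le_bc; rewrite /slice -[in drop b s](subnK le_ab) -drop_drop -takeD.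
by rewrite addnBAC // subnKC // (leq_trans le_ab).
Qed.

Lemma slice1 x0 a : a < size s -> slice s a a.+1 = [:: nth x0 s a].
Proof. by move=> lt_a; rewrite /slice subSnn (drop_nth x0 lt_a) /= take0. Qed.
End Slices.

Lemma blockE (T : Type) (ws : seq (seq T)) a b : block ws a b = flatten (slice ws a b).
Proof. by []. Qed.

Section Runs.
Variables (M : Type) (mul : M -> M -> M) (one : M).
Hypothesis monoidM : is_monoid mul one.
Variables (Sigma Q : finType) (delta : Q -> option Sigma -> list (Q * M)).
Local Notation run := (run mul one delta).
Local Notation mprod := (mprod mul one).

Let mulA : associative mul := monoidM.1.
Let mul1m : left_id one mul := monoidM.2.1.
Let mulm1 : right_id one mul := monoidM.2.2.

Lemma mprod_cat s1 s2 : mprod (s1 ++ s2) = mul (mprod s1) (mprod s2).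
Proof. by elim: s1 => [|x s1 IH] /=; rewrite ?mul1m // IH mulA. Qed.

Lemma run_cat q u xu p v xv q' :
  run q u xu p -> run p v xv q' -> run q (u ++ v) (mul xu xv) q'.
Proof.
elim=> {q u xu p} [q | q a q1 m w x q2 d_q _ IH | q q1 m w x q2 d_q _ IH] run_v.
- by rewrite mul1m.
- by rewrite -mulA; apply: run_letter d_q (IH run_v).
- by rewrite -mulA; apply: run_eps d_q (IH run_v).
Qed.

Lemma run_cat_inv q u v x q' : run q (u ++ v) x q' ->
  exists p xu xv, [/\ run q u xu p, run p v xv q' & x = mul xu xv].
Proof.
move Euv: (u ++ v) => w run_w; elim: run_w u Euv => {q w x q'}
  [q | q a q1 m w x q2 d_q run_w IH | q q1 m w x q2 d_q _ IH] u Euv.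
- case: u Euv => [/= ->|//].
  by exists q, one, one; split; rewrite ?mul1m //; apply: run_nil.
- case: u Euv => [/= -> | b u [-> /IH [p [xu [xv [run_u run_v ->]]]]]].
    exists q, one, (mul m x).
    by split; [apply: run_nil | apply: run_letter d_q _ | rewrite mul1m].
  by exists p, (mul m xu), xv; split; [apply: run_letter d_q run_u | | rewrite mulA].
- have [p [xu [xv [run_u run_v ->]]]] := IH u Euv.
  by exists p, (mul m xu), xv; split; [apply: run_eps d_q run_u | | rewrite mulA].
Qed.

Lemma run_flatten_loops (I : Type) (W : I -> seq Sigma) (y : I -> M) q (l : seq I) :
  (forall j, run q (W j) (y j) q) ->
  run q (flatten [seq W j | j <- l]) (mprod [seq y j | j <- l]) q.
Proof. by move=> run_W; elim: l => [|j l IH] /=; [apply: run_nil | apply: run_cat]. Qed.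

Lemma run_flatten_trace ws q x q' : ws != [::] -> run q (flatten ws) x q' ->
  exists (st : nat -> Q) (xs : seq M),
    [/\ size xs = size ws, st 0 = q, st (size ws) = q',
        forall j, j < size ws -> run (st j) (nth [::] ws j) (nth one xs j) (st j.+1)
      & x = mprod xs].
Proof.
elim: ws q x => [|u ws IH] // q x _ /=.
case: ws IH => [_ | u' ws IH].
  rewrite cats0 => run_u; exists (fun j => if j is 0 then q else q'), [:: x].
  by split=> //=; case=> //= _.
move=> /run_cat_inv [p [xu [xv [run_u run_v ->]]]].
have [st [xs [size_xs st0 st_end run_st ->]]] := IH p xv isT run_v.
exists (fun j => if j is j'.+1 then st j' else q), (xu :: xs).
by split=> //=; [rewrite size_xs | case=> [_ | j /run_st //]; rewrite st0].
Qed.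

Section Trace.
Variables (ws : seq (seq Sigma)) (st : nat -> Q) (xs : seq M).
Hypothesis size_xs : size xs = size ws.
Hypothesis run_st :
  forall j, j < size ws -> run (st j) (nth [::] ws j) (nth one xs j) (st j.+1).

Lemma run_block a b : a <= b -> b <= size ws ->
  run (st a) (block ws a b) (mprod (slice xs a b)) (st b).
Proof.
move=> /subnKC <-; elim: (b - a) => [|d IH] le_size.
  by rewrite addn0 blockE !slicenn; apply: run_nil.
rewrite addnS in le_size *.
have sliceS (T : Type) (s : seq T) :
    slice s a (a + d).+1 = slice s a (a + d) ++ slice s (a + d) (a + d).+1.
  by rewrite slice_cat ?leq_addr.
rewrite blockE !sliceS flatten_cat mprod_cat (slice1 [::]) // (slice1 one) ?size_xs //=.
by rewrite cats0 mulm1; apply: run_cat (IH (ltnW le_size)) (run_st le_size).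
Qed.

Lemma run_loops (c : nat -> nat) (q : Q) (k : nat) :
  {homo c : a b / a <= b} -> c k <= size ws -> (forall j, j <= k -> st (c j) = q) ->
  exists (xl xr : M) (y : 'I_k -> M),
    [/\ run (st 0) (block ws 0 (c 0)) xl q,
        forall j : 'I_k, run q (block ws (c j) (c j.+1)) (y j) q,
        run q (block ws (c k) (size ws)) xr (st (size ws))
      & mprod xs = mul xl (mul (mprod [seq y j | j <- enum 'I_k]) xr)].
Proof.
move=> c_homo le_ck st_c; have le_c c' : c' <= k -> c c' <= size ws.
  by move=> le_c'k; apply: leq_trans (c_homo _ _ le_c'k) le_ck.
exists (mprod (slice xs 0 (c 0))), (mprod (slice xs (c k) (size ws))),
  (fun j => mprod (slice xs (c j) (c j.+1))); split.
- by rewrite -(st_c 0) //; apply: run_block; rewrite ?le_c.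
- move=> j; rewrite -{1}(st_c j (ltnW (ltn_ord j))) -(st_c j.+1 (ltn_ord j)).
  by apply: run_block; rewrite ?c_homo ?le_c.
- by rewrite -(st_c k) //; apply: run_block.
have prod_cat a b d : a <= b -> b <= d ->
    mul (mprod (slice xs a b)) (mprod (slice xs b d)) = mprod (slice xs a d).
  by move=> le_ab le_bd; rewrite -mprod_cat slice_cat.
rewrite -[in LHS](slice_full xs) size_xs.
exact: esym (telescope_ord_split (fun a => congr1 mprod (slicenn xs a)) prod_cat c_homo le_ck).
Qed.
End Trace.

Lemma run_repeated_state k q0 ws x qf :
  #|Q| * k < size ws -> run q0 (flatten ws) x qf ->
  exists (i : nat -> nat) (q : Q),
    [/\ {homo i : a b / a <= b}, forall j, j <= k -> i j < i j.+1, i k.+1 <= size ws &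
    exists (xl xr : M) (y : 'I_k -> M),
      [/\ run q0 (block ws 0 (i 0)) xl q,
          forall j : 'I_k, run q (block ws (i j) (i j.+1)) (y j) q,
          run q (block ws (i k) (size ws)) xr qf
        & x = mul xl (mul (mprod [seq y j | j <- enum 'I_k]) xr)]].
Proof.
move=> lt_size run_ws.
have ws_n0 : ws != [::] by rewrite -size_eq0 -lt0n (leq_ltn_trans _ lt_size).
have [st [xs [size_xs <- <- run_st ->]]] := run_flatten_trace ws_n0 run_ws.
have [q] : exists q, k < count_mem q [seq st j | j <- iota 0 (size ws)].
  by apply: pigeonhole_count; rewrite size_map size_iota.
rewrite count_map => /increasing_indices [i [i_homo i_lt st_i i_le]].
exists i, q; split=> //; apply: run_loops => // [|j /st_i /eqP //].
exact: leq_trans (ltnW (i_lt k (leqnn k))) i_le.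
Qed.

End Runs.

Lemma flatten_blocks (T : Type) (ws : seq (seq T)) (c : nat -> nat) (k : nat) :
  {homo c : a b / a <= b} -> c k <= size ws ->
  flatten ws = block ws 0 (c 0)
               ++ flatten [seq block ws (c j) (c j.+1) | j : 'I_k <- enum 'I_k]
               ++ block ws (c k) (size ws).
Proof.
move=> c_homo le_ck; have block_cat a b d : a <= b -> b <= d ->
    block ws a b ++ block ws b d = block ws a d.
  by move=> le_ab le_bd; rewrite !blockE -flatten_cat slice_cat.
rewrite -[in LHS](slice_full ws).
have block_nn a : block ws a a = [::] by rewrite blockE slicenn.
exact: esym (telescope_ord_split block_nn block_cat c_homo le_ck).
Qed.

Theorem lemma2 (k : nat) (M : Type) (mul : M -> M -> M) (one : M)
    (Sigma : finType) (L : seq Sigma -> Prop) :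
  2 <= k ->
  is_monoid mul one ->
  k_permutable mul one k ->
  in_LRat mul one L ->
  exists m : nat, 0 < m /\
    forall (w : seq Sigma) (ws : seq (seq Sigma)),
      L w -> m <= size w ->
      size ws = m -> all (fun u => 0 < size u) ws -> flatten ws = w ->
      exists i : nat -> nat,
        (forall j, j <= k -> i j < i j.+1) /\ i k.+1 <= m /\
        let lambda := block ws 0 (i 0) in
        let W := fun j : 'I_k => block ws (i j) (i j.+1) in
        let mu := block ws (i k) m in
        w = lambda ++ flatten [seq W j | j <- enum 'I_k] ++ mu /\
        exists sigma : 'S_k, sigma != 1%g /\
          L (lambda ++ flatten [seq W (sigma j) | j <- enum 'I_k] ++ mu).
Proof.
move=> _ monoidM permM [Q [delta [q0 [Qa [I0 [I1 [_ [_ L_acc]]]]]]]].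
exists (#|Q| * k).+1; split=> // w ws Lw _ size_ws _ flatten_ws.
have [qf [x [run_w [qf_acc acc_x]]]] := (L_acc w).1 Lw.
have lt_size : #|Q| * k < size ws by rewrite size_ws.
rewrite -size_ws -flatten_ws in run_w *.
have [i [q [i_homo i_lt i_le [xl [xr [y [run_l run_y run_r x_eq]]]]]]] :=
  run_repeated_state monoidM lt_size run_w.
have le_ik : i k <= size ws := leq_trans (ltnW (i_lt k (leqnn k))) i_le.
exists i; split=> //; split=> //=; split; first exact: flatten_blocks.
have [sigma [sigma_neq1 perm_y]] := permM y.
exists sigma; split=> //; apply/L_acc.
exists qf, (mul xl (mul (mprod mul one [seq y (sigma j) | j <- enum 'I_k]) xr)).
split; last by rewrite -perm_y -x_eq.
apply: (run_cat monoidM run_l (run_cat monoidM _ run_r)).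
by apply: run_flatten_loops => // j; apply: run_y.
Qed.
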